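(* In the nondeterministic Outcome Logic instance, for every program $C$ and atomic assertions $P,Q$: \[ \vDash\{\!|P|\!\}\,C\,\{\!|Q|\!\}\quad\text{iff}\quad\vDash\langle P\rangle\,C\,\langle Q\oplus\top\rangle, \] where $\vDash\{\!|P|\!\}C\{\!|Q|\!\}$ means: for every $\sigma\in\Sigma$ with $\sigma\vDash_\Sigma P$ there exists $\tau\in[\![C]\!](\sigma)$ with $\tau\vDash_\Sigma Q$.
   Context: Nondeterministic instance: powerset monad ($\mathsf{bind}(S,k)=\bigcup_{x\in S}k(x)$, $\mathsf{unit}(x)=\{x\}$, monoid $(\cup,\emptyset)$); a program $C$ has semantics $[\![C]\!]\colon\Sigma\to2^\Sigma$ (built from $\mathbb{0},\mathbb{1},;,+,{}^\star$ and atomic commands as usual) and $[\![C]\!]^\dagger(S)=\bigcup_{\sigma\in S}[\![C]\!](\sigma)$. Atomic assertions carry a state relation $\vDash_\Sigma$; a set $S$ satisfies atomic $P$ iff $S\neq\emptyset$ and every $\sigma\in S$ satisfies $P$. $S\vDash\top$ always; $S\vDash\varphi\oplus\psi$ iff $S=S_1\cup S_2$ with $S_1\vDash\varphi$, $S_2\vDash\psi$. $\vDash\langle\varphi\rangle C\langle\psi\rangle$ iff every $S\subseteq\Sigma$ with $S\vDash\varphi$ has $[\![C]\!]^\dagger(S)\vDash\psi$. *)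

Set Implicit Arguments.

Definition pset (S : Type) := S -> Prop.

Inductive cmd (Act : Type) : Type :=
| CZero : cmd Act
| COne : cmd Act
| CSeq : cmd Act -> cmd Act -> cmd Act
| CPlus : cmd Act -> cmd Act -> cmd Act
| CStar : cmd Act -> cmd Act
| CAtom : Act -> cmd Act.

Definition unit_set {S : Type} (x : S) : pset S := fun y => y = x.
Definition bind_set {S T : Type} (A : pset S) (k : S -> pset T) : pset T :=
  fun y => exists x, A x /\ k x y.

(* C^n = C ; ... ; C  (n times), with C^0 = 1, used for the Kleene star:
   [[C^*]](s) = \bigcup_n [[C]]^n(s)  (the least fixpoint of
   k |-> unit \cup bind([[C]], k)). *)
Fixpoint iter_sem {S : Type} (f : S -> pset S) (n : nat) : S -> pset S :=
  match n with
  | O => fun s => unit_set s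
  | Datatypes.S m => fun s => bind_set (f s) (iter_sem f m)
  end.

Fixpoint sem {Act S : Type} (act : Act -> S -> pset S) (C : cmd Act)
  : S -> pset S :=
  match C with
  | @CZero _ => fun _ _ => False
  | @COne _ => fun s => unit_set s
  | CSeq C1 C2 => fun s => bind_set (sem act C1 s) (sem act C2)
  | CPlus C1 C2 => fun s t => sem act C1 s t \/ sem act C2 s t
  | CStar C1 => fun s t => exists n, iter_sem (sem act C1) n s t
  | @CAtom _ a => act a
  end.

Definition sem_dagger {Act S : Type} (act : Act -> S -> pset S) (C : cmd Act)
  (X : pset S) : pset S := bind_set X (sem act C).

Inductive assn (S : Type) : Type :=
| AAtom : (S -> Prop) -> assn S
| ATop : assn S
| AOplus : assn S -> assn S -> assn S.

Fixpoint asat {S : Type} (X : pset S) (phi : assn S) : Prop :=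
  match phi with
  | AAtom P => (exists s, X s) /\ (forall s, X s -> P s)
  | @ATop _ => True
  | AOplus phi1 phi2 =>
      exists X1 X2 : pset S,
        (forall s, X s <-> X1 s \/ X2 s) /\ asat X1 phi1 /\ asat X2 phi2
  end.

Definition ol_valid {Act S : Type} (act : Act -> S -> pset S)
  (phi : assn S) (C : cmd Act) (psi : assn S) : Prop :=
  forall X : pset S, asat X phi -> asat (sem_dagger act C X) psi.

Definition lower_valid {Act S : Type} (act : Act -> S -> pset S)
  (P : S -> Prop) (C : cmd Act) (Q : S -> Prop) : Prop :=
  forall s, P s -> exists t, sem act C s t /\ Q t.

From Stdlib Require Import Setoid.

(* Satisfying [Q ⊕ ⊤] only asks for a nonempty part of the outcome set where
   [Q] holds, i.e. for a single [Q]-outcome.  Hence the outcome-logic triple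
   with precondition [P] is equivalent to asking each [P]-state, viewed as the
   singleton set, to reach some [Q]-state; conversely, an arbitrary nonempty
   [P]-set reaches such a state through any one of its elements. *)

Lemma asat_oplus_top {S : Type} (X : pset S) (phi : assn S) :
  asat X (AOplus phi (ATop S)) <->
  exists Y : pset S, (forall s, Y s -> X s) /\ asat Y phi.
Proof.
  simpl; split.
  - intros [X1 [X2 [HX [H1 _]]]].
    exists X1; split; [intros s Hs; apply HX; left; exact Hs | exact H1].
  - intros [Y [HYX HY]].
    exists Y, X; split; [| split; [exact HY | exact I]].
    intros s; split; [intros Hs; right; exact Hs | intros [Hs | Hs]; auto].
Qed.

Lemma asat_oplus_top_atom {S : Type} (X : pset S) (Q : S -> Prop) :
  asat X (AOplus (AAtom Q) (ATop S)) <-> exists t, X t /\ Q t.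
Proof.
  rewrite asat_oplus_top; simpl; split.
  - intros [Y [HYX [[t Ht] HQ]]].
    exists t; split; auto.
  - intros [t [Ht HQ]].
    exists (fun u => X u /\ Q u); split.
    + intros u [Hu _]; exact Hu.
    + split; [exists t; split; assumption | intros u [_ HQu]; exact HQu].
Qed.

Lemma asat_atom_unit {S : Type} (s : S) (P : S -> Prop) :
  asat (unit_set s) (AAtom P) <-> P s.
Proof.
  unfold unit_set; simpl; split.
  - intros [_ HP]; apply HP; reflexivity.
  - intros Ps; split; [exists s; reflexivity | intros u ->; exact Ps].
Qed.

Lemma sem_dagger_unit {Act S : Type} (act : Act -> S -> pset S)
  (C : cmd Act) (s t : S) :
  sem_dagger act C (unit_set s) t <-> sem act C s t.
Proof.
  unfold sem_dagger, bind_set, unit_set; split.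
  - intros [x [-> Hx]]; exact Hx.
  - intros Ht; exists s; split; [reflexivity | exact Ht].
Qed.

Theorem theoremC1 (Act Sigma : Type) (act : Act -> Sigma -> pset Sigma)
  (C : cmd Act) (P Q : Sigma -> Prop) :
  lower_valid act P C Q <->
  ol_valid act (AAtom P) C (AOplus (AAtom Q) (ATop Sigma)).
Proof.
  unfold lower_valid, ol_valid; split.
  - intros Hlower X [[s Hs] HP].
    apply asat_oplus_top_atom.
    destruct (Hlower s (HP s Hs)) as [t [Ht HQ]].
    exists t; split; [exists s; split; assumption | exact HQ].
  - intros Hol s Ps.
    apply asat_atom_unit, Hol, asat_oplus_top_atom in Ps as [t [Ht HQ]].
    exists t; split; [apply sem_dagger_unit; exact Ht | exact HQ].
Qed.
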